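(* Let $u,a,b$ be positive integers with $u\le\min(a-1,b)$. Suppose integers $c_{pq},d_{pq}\in[1,a]$ ($1\le p\le u$, $1\le q\le b$) satisfy, for all $p,q$ for which the indices are in range, $$d_{pq}\ge c_{pq},\qquad c_{pq}\ge d_{p,q+1},\qquad c_{pq}>d_{p-1,q}.$$ Then there exist integers $c'_{pq},d'_{pq}$ ($1\le p\le u$, $1\le q\le b$) such that: (i) $d'_{pq}\ge c'_{pq}$ and $c'_{pq}>d'_{p-1,q}$ for all $p,q$ with indices in range; (ii) $c'_{pq}=d'_{p,q+1}$ for $1\le p\le u$, $1\le q\le b-1$; (iii) $d'_{p1}=a-u+p$ and $c'_{pb}=p$ for $1\le p\le u$; (iv) $\bigcup_p([c_{pq},d_{pq}]\cap\mathbb{Z})\subseteq\bigcup_p([c'_{pq},d'_{pq}]\cap\mathbb{Z})$ for each $q=1,\dots,b$; moreover, if this inclusion is an equality for every $q$, then $c_{pq}=c'_{pq}$ and $d_{pq}=d'_{pq}$ for all $p,q$. *)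

From Stdlib Require Export ZArith Lia.
Open Scope Z_scope.

Definition union_col (u : nat) (c d : nat -> nat -> Z) (q : nat) (x : Z) : Prop :=
  exists p : nat, (1 <= p <= u)%nat /\ c p q <= x <= d p q.

(* Row p of the new configuration is the lattice path [c' p q = stair p q],
   [d' p q = stair p (q - 1)] descending from a - u + p to p: take [c p q],
   clamp it to p in the lower-right corner where that value is forced, and
   raise it just enough to exceed its upper-left neighbour.  An original
   interval is covered because, in its column, the first new interval reaching
   up to one of its points already starts below that point.

   For the equality case count points: equal unions have equal sizes, so the
   original intervals have the same total length as the new ones.  In each row
   the new lengths telescope to a - u + b, while the original ones fall short of
   it by the nonnegative slack (c p b - p) + sum_q (c p (q - 1) - d p q), where
   c p 0 = a - u + p.  Hence every slack vanishes, the original configuration is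
   itself such a lattice path, and the construction returns it unchanged. *)

Local Open Scope bool_scope.
Local Open Scope Z_scope.

Lemma chain_mono (f : nat -> Z) (m n : nat) :
  (forall p, (m < p <= n)%nat -> f (p - 1)%nat <= f p) ->
  forall i j, (m <= i <= j)%nat -> (j <= n)%nat -> f i <= f j.
Proof.
  intros Hf i j Hij Hjn. induction j as [|j IH]; [replace i with 0%nat by lia; lia|].
  destruct (Nat.eq_dec i (S j)) as [->|Hne]; [lia|].
  specialize (Hf (S j) ltac:(lia)). rewrite Nat.sub_succ, Nat.sub_0_r in Hf.
  specialize (IH ltac:(lia) ltac:(lia)). lia.
Qed.

Lemma chain_strict (f : nat -> Z) (m n : nat) :
  (forall p, (m < p <= n)%nat -> f (p - 1)%nat < f p) ->
  forall i j, (m <= i <= j)%nat -> (j <= n)%nat -> f i + Z.of_nat (j - i) <= f j.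
Proof.
  intros Hf i j Hij Hjn.
  enough (f i - Z.of_nat i <= f j - Z.of_nat j) by lia.
  apply (chain_mono (fun k => f k - Z.of_nat k) m n); [|lia|lia].
  intros p Hp. specialize (Hf p Hp). lia.
Qed.

Lemma first_crossing (f : nat -> Z) (n : nat) (x : Z) :
  f 0%nat < x <= f n -> exists k, (1 <= k <= n)%nat /\ f (k - 1)%nat < x <= f k.
Proof.
  induction n as [|n IH]; intros Hx; [lia|].
  destruct (Z_lt_le_dec (f n) x) as [Hlt|Hle].
  - exists (S n). rewrite Nat.sub_succ, Nat.sub_0_r. split; lia.
  - destruct IH as [k Hk]; [lia|]. exists k. split; [lia|tauto].
Qed.

Fixpoint sumZ (f : nat -> Z) (n : nat) : Z :=
  match n with O => 0 | S k => sumZ f k + f (S k) end.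

Lemma sumZ_ext (f g : nat -> Z) (n : nat) :
  (forall i, (1 <= i <= n)%nat -> f i = g i) -> sumZ f n = sumZ g n.
Proof.
  induction n as [|n IH]; intros Hfg; simpl; [reflexivity|].
  rewrite (Hfg (S n)) by lia. rewrite IH; [reflexivity|].
  intros i Hi. apply Hfg. lia.
Qed.

Lemma sumZ_add (f g : nat -> Z) (n : nat) :
  sumZ (fun i => f i + g i) n = sumZ f n + sumZ g n.
Proof. induction n; simpl; lia. Qed.

Lemma sumZ_sub (f g : nat -> Z) (n : nat) :
  sumZ (fun i => f i - g i) n = sumZ f n - sumZ g n.
Proof. induction n; simpl; lia. Qed.

Lemma sumZ_swap (f : nat -> nat -> Z) (n m : nat) :
  sumZ (fun i => sumZ (fun j => f i j) m) n = sumZ (fun j => sumZ (fun i => f i j) n) m.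
Proof.
  induction n as [|n IH]; simpl.
  - induction m; simpl; lia.
  - rewrite IH, <- sumZ_add. reflexivity.
Qed.

Lemma sumZ_telescope (g : nat -> Z) (n : nat) :
  sumZ (fun i => g (i - 1)%nat - g i + 1) n = g 0%nat - g n + Z.of_nat n.
Proof. induction n as [|n IH]; simpl sumZ; [lia|]. rewrite IH, Nat.sub_0_r. lia. Qed.

Lemma sumZ_nonneg (f : nat -> Z) (n : nat) :
  (forall i, (1 <= i <= n)%nat -> 0 <= f i) -> 0 <= sumZ f n.
Proof.
  induction n as [|n IH]; intros Hf; simpl; [lia|].
  specialize (IH ltac:(intros i Hi; apply Hf; lia)). specialize (Hf (S n) ltac:(lia)). lia.
Qed.

Lemma sumZ_eq0 (f : nat -> Z) (n : nat) :
  (forall i, (1 <= i <= n)%nat -> 0 <= f i) -> sumZ f n = 0 ->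
  forall i, (1 <= i <= n)%nat -> f i = 0.
Proof.
  induction n as [|n IH]; intros Hf Hsum i Hi; simpl in Hsum; [lia|].
  assert (0 <= sumZ f n) by (apply sumZ_nonneg; intros k Hk; apply Hf; lia).
  assert (0 <= f (S n)) by (apply Hf; lia).
  destruct (Nat.eq_dec i (S n)) as [->|Hne]; [lia|].
  apply IH; [intros k Hk; apply Hf; lia | lia | lia].
Qed.

Fixpoint count_upto (f : Z -> bool) (n : nat) : Z :=
  match n with
  | O => 0
  | S k => count_upto f k + (if f (Z.of_nat (S k)) then 1 else 0)
  end.

Lemma count_upto_ext (f g : Z -> bool) (n : nat) :
  (forall x, f x = g x) -> count_upto f n = count_upto g n.
Proof. intros Hfg. induction n as [|n IH]; simpl; [reflexivity|]. now rewrite IH, Hfg. Qed.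

Lemma count_upto_orb (f g : Z -> bool) (n : nat) :
  (forall x, f x = true -> g x = false) ->
  count_upto (fun x => f x || g x) n = count_upto f n + count_upto g n.
Proof.
  intros Hdisj. induction n as [|n IH]; cbn [count_upto]; [reflexivity|]. rewrite IH.
  destruct (f (Z.of_nat (S n))) eqn:Hf; [rewrite (Hdisj _ Hf)|];
    destruct (g (Z.of_nat (S n))); simpl; lia.
Qed.

Lemma count_upto_interval (l r : Z) (n : nat) : 1 <= l ->
  count_upto (fun x => (l <=? x) && (x <=? r)) n = Z.max 0 (Z.min r (Z.of_nat n) - l + 1).
Proof.
  intros Hl. induction n as [|n IH]; cbn [count_upto]; [lia|]. rewrite IH.
  destruct (Z.leb_spec l (Z.of_nat (S n))), (Z.leb_spec (Z.of_nat (S n)) r); simpl; lia.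
Qed.

Fixpoint mem_intervals (l r : nat -> Z) (m : nat) (x : Z) : bool :=
  match m with
  | O => false
  | S k => mem_intervals l r k x || ((l (S k) <=? x) && (x <=? r (S k)))
  end.

Lemma mem_intervalsP (l r : nat -> Z) (m : nat) (x : Z) :
  mem_intervals l r m x = true <-> exists p, (1 <= p <= m)%nat /\ l p <= x <= r p.
Proof.
  induction m as [|m IH]; simpl.
  - split; [discriminate | intros [p [Hp _]]; lia].
  - rewrite Bool.orb_true_iff, IH, Bool.andb_true_iff, !Z.leb_le. split.
    + intros [[p [Hp Hx]] | Hx]; [exists p | exists (S m)]; split; auto; lia.
    + intros [p [Hp Hx]]. destruct (Nat.eq_dec p (S m)) as [->|Hne]; [now right|].
      left. exists p. split; [lia | exact Hx].
Qed.

Definition sorted_intervals (l r : nat -> Z) (m n : nat) : Prop :=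
  (forall p, (1 <= p <= m)%nat -> 1 <= l p <= r p /\ r p <= Z.of_nat n) /\
  (forall p, (2 <= p <= m)%nat -> r (p - 1)%nat < l p).

Lemma count_mem_intervals (l r : nat -> Z) (m n : nat) :
  sorted_intervals l r m n ->
  count_upto (mem_intervals l r m) n = sumZ (fun p => r p - l p + 1) m.
Proof.
  induction m as [|m IH]; intros [Hlr Hsep].
  { clear Hlr Hsep. induction n as [|n IHn]; simpl in *; lia. }
  assert (Hr : forall p, (1 <= p <= m)%nat -> r p <= r m).
  { intros p Hp. apply (chain_mono r 1 m); [|lia|lia].
    intros k Hk. specialize (Hsep k ltac:(lia)). specialize (Hlr k ltac:(lia)). lia. }
  simpl mem_intervals. rewrite count_upto_orb.
  - rewrite IH by (split; intros p Hp; [apply Hlr | apply Hsep]; lia).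
    specialize (Hlr (S m) ltac:(lia)). rewrite count_upto_interval by lia. simpl. lia.
  - intros x [p [Hp Hx]]%mem_intervalsP.
    specialize (Hr p Hp). specialize (Hsep (S m) ltac:(lia)).
    rewrite Nat.sub_succ, Nat.sub_0_r in Hsep.
    destruct (Z.leb_spec (l (S m)) x); [lia | reflexivity].
Qed.

Lemma sum_lengths_eq (l r l' r' : nat -> Z) (m n : nat) :
  sorted_intervals l r m n -> sorted_intervals l' r' m n ->
  (forall x, (exists p, (1 <= p <= m)%nat /\ l p <= x <= r p) <->
             (exists p, (1 <= p <= m)%nat /\ l' p <= x <= r' p)) ->
  sumZ (fun p => r p - l p + 1) m = sumZ (fun p => r' p - l' p + 1) m.
Proof.
  intros Hs Hs' Heq. rewrite <- (count_mem_intervals l r m n Hs), <- (count_mem_intervals l' r' m n Hs').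
  apply count_upto_ext. intros x. apply Bool.eq_iff_eq_true. rewrite !mem_intervalsP. apply Heq.
Qed.
Section Staircase.

Variables (u a b : nat) (c d : nat -> nat -> Z).
Hypothesis Hua : (u <= a - 1)%nat.
Hypothesis Hub : (u <= b)%nat.
Hypothesis Hrange : forall p q, (1 <= p <= u)%nat -> (1 <= q <= b)%nat ->
  1 <= c p q <= Z.of_nat a /\ 1 <= d p q <= Z.of_nat a.
Hypothesis Hdc : forall p q, (1 <= p <= u)%nat -> (1 <= q <= b)%nat -> d p q >= c p q.
Hypothesis Hcd : forall p q, (1 <= p <= u)%nat -> (1 <= q)%nat -> (q + 1 <= b)%nat ->
  c p q >= d p (q + 1)%nat.
Hypothesis Hcd' : forall p q, (2 <= p <= u)%nat -> (1 <= q <= b)%nat ->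
  c p q > d (p - 1)%nat q.

Local Notation top p := (Z.of_nat a - Z.of_nat u + Z.of_nat p).

Lemma c_shift p p' q : (1 <= p <= p')%nat -> (p' <= u)%nat -> (1 <= q <= b)%nat ->
  c p q + Z.of_nat (p' - p) <= c p' q.
Proof.
  intros Hp Hp' Hq. apply (chain_strict (fun k => c k q) 1 u); [|lia|lia].
  intros k Hk. pose proof (Hcd' k q Hk Hq). pose proof (Hdc (k - 1) q ltac:(lia) Hq). lia.
Qed.

Lemma d_shift p p' q : (1 <= p <= p')%nat -> (p' <= u)%nat -> (1 <= q <= b)%nat ->
  d p q + Z.of_nat (p' - p) <= d p' q.
Proof.
  intros Hp Hp' Hq. apply (chain_strict (fun k => d k q) 1 u); [|lia|lia].
  intros k Hk. pose proof (Hcd' k q Hk Hq). pose proof (Hdc k q ltac:(lia) Hq). lia.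
Qed.

Lemma c_ge_index p q : (1 <= p <= u)%nat -> (1 <= q <= b)%nat -> Z.of_nat p <= c p q.
Proof.
  intros Hp Hq. pose proof (c_shift 1 p q ltac:(lia) ltac:(lia) Hq).
  pose proof (Hrange 1 q ltac:(lia) Hq). lia.
Qed.

Lemma d_le_top p q : (1 <= p <= u)%nat -> (1 <= q <= b)%nat -> d p q <= top p.
Proof.
  intros Hp Hq. pose proof (d_shift p u q ltac:(lia) ltac:(lia) Hq).
  pose proof (Hrange u q ltac:(lia) Hq). lia.
Qed.

(* With [c p 0 := a - u + p], condition (ii) and [d p 1 = a - u + p] merge into
   [d p q = c_ext p (q - 1)]. *)
Definition c_ext (p q : nat) : Z := match q with O => top p | S _ => c p q end.

Lemma c_ext_S p q : (1 <= q)%nat -> c_ext p q = c p q.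
Proof. intros Hq. destruct q; [inversion Hq | reflexivity]. Qed.

Lemma c_ext_ge_index p q : (1 <= p <= u)%nat -> (q <= b)%nat -> Z.of_nat p <= c_ext p q.
Proof. intros Hp Hq. destruct q as [|q]; simpl; [lia | apply c_ge_index; lia]. Qed.

Lemma d_le_c_ext p q : (1 <= p <= u)%nat -> (1 <= q <= b)%nat -> d p q <= c_ext p (q - 1).
Proof.
  intros Hp Hq. destruct q as [|[|q]]; [lia | apply d_le_top; lia |].
  pose proof (Hcd p (S q) Hp ltac:(lia) ltac:(lia)) as Hle.
  rewrite Nat.add_1_r in Hle. simpl. lia.
Qed.

(* In the corner [p + b <= u + q] the conditions (i)-(iii) force [c' p q = p]. *)
Definition target (p q : nat) : Z :=
  if (p + b <=? u + q)%nat then Z.of_nat p else c_ext p q.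

Lemma target_0 p : (1 <= p)%nat -> target p 0 = top p.
Proof. intros Hp. unfold target. destruct (Nat.leb_spec (p + b) (u + 0)); [lia | reflexivity]. Qed.

Lemma target_ge_index p q : (1 <= p <= u)%nat -> (q <= b)%nat -> Z.of_nat p <= target p q.
Proof. intros Hp Hq. unfold target. destruct (_ <=? _)%nat; [lia | now apply c_ext_ge_index]. Qed.

Lemma target_le_c_ext p q : (1 <= p <= u)%nat -> (q <= b)%nat -> target p q <= c_ext p q.
Proof. intros Hp Hq. unfold target. destruct (_ <=? _)%nat; [now apply c_ext_ge_index | lia]. Qed.

Lemma target_ge_d p q : (1 <= p <= u)%nat -> (1 <= q <= b)%nat -> (u + q <= p + b)%nat ->
  d p q <= target p (q - 1).
Proof.
  intros Hp Hq Hpq. unfold target.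
  destruct (Nat.leb_spec (p + b) (u + (q - 1))); [lia | now apply d_le_c_ext].
Qed.

Lemma target_mono p q : (1 <= p <= u)%nat -> (1 <= q <= b)%nat -> target p q <= target p (q - 1).
Proof.
  intros Hp Hq. unfold target at 1. destruct (Nat.leb_spec (p + b) (u + q)).
  - apply target_ge_index; lia.
  - rewrite c_ext_S by lia. pose proof (Hdc p q Hp Hq).
    pose proof (target_ge_d p q Hp Hq ltac:(lia)). lia.
Qed.

(* Row 0 acts as a floor at height 0, so that row 1 needs no special case. *)
Fixpoint stair (p q : nat) : Z :=
  match p, q with
  | O, _ => 0
  | S _, O => top p
  | S p', S q' => Z.max (target p q) (stair p' q' + 1)
  end.

Lemma stair_0 p : (1 <= p)%nat -> stair p 0 = top p.
Proof. destruct p; [lia | reflexivity]. Qed.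

Lemma stair_eq p q : (1 <= p)%nat -> (1 <= q)%nat ->
  stair p q = Z.max (target p q) (stair (p - 1) (q - 1) + 1).
Proof.
  destruct p as [|p], q as [|q]; try lia. intros _ _.
  rewrite !Nat.sub_succ, !Nat.sub_0_r. reflexivity.
Qed.

Lemma stair_ge_target p q : (1 <= p)%nat -> target p q <= stair p q.
Proof.
  intros Hp. destruct (Nat.eq_dec q 0) as [->|Hq].
  - rewrite stair_0, target_0 by lia. lia.
  - rewrite stair_eq by lia. lia.
Qed.

Lemma stair_gt_prev p q : (1 <= p)%nat -> (1 <= q)%nat -> stair (p - 1) (q - 1) < stair p q.
Proof. intros Hp Hq. rewrite (stair_eq p q) by lia. lia. Qed.

Lemma stair_mono p q : (p <= u)%nat -> (1 <= q <= b)%nat -> stair p q <= stair p (q - 1).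
Proof.
  revert q. induction p as [|p IH]; intros q Hp Hq; [simpl; lia|].
  rewrite (stair_eq (S p) q) by lia. rewrite Nat.sub_succ, Nat.sub_0_r. apply Z.max_lub.
  - transitivity (target (S p) (q - 1)); [apply target_mono | apply stair_ge_target]; lia.
  - destruct (Nat.eq_dec q 1) as [->|Hq1].
    + destruct p; simpl; lia.
    + pose proof (IH (q - 1)%nat ltac:(lia) ltac:(lia)).
      pose proof (stair_gt_prev (S p) (q - 1) ltac:(lia) ltac:(lia)) as Hgt.
      rewrite Nat.sub_succ, Nat.sub_0_r in Hgt. lia.
Qed.

Lemma stair_corner p q : (p + b <= u + q)%nat -> stair p q <= Z.of_nat p.
Proof.
  revert q. induction p as [|p IH]; intros q Hpq; [simpl; lia|].
  destruct q as [|q]; [lia|]. cbn [stair]. apply Z.max_lub.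
  - unfold target. destruct (Nat.leb_spec (S p + b) (u + S q)); lia.
  - specialize (IH q ltac:(lia)). lia.
Qed.

Lemma stair_last p : (1 <= p <= u)%nat -> stair p b = Z.of_nat p.
Proof.
  intros Hp. apply Z.le_antisymm; [apply stair_corner; lia|].
  transitivity (target p b); [apply target_ge_index | apply stair_ge_target]; lia.
Qed.

Lemma stair_bounds p q : (1 <= p <= u)%nat -> (q <= b)%nat -> Z.of_nat p <= stair p q <= top p.
Proof.
  intros Hp Hq.
  assert (Hdec : forall i j, (i <= j <= b)%nat -> stair p j <= stair p i).
  { intros i j Hij. enough (- stair p i <= - stair p j) by lia.
    apply (chain_mono (fun k => - stair p k) 0 b); [|lia|lia].
    intros k Hk. pose proof (stair_mono p k ltac:(lia) ltac:(lia)). lia. }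
  pose proof (Hdec q b ltac:(lia)). pose proof (Hdec 0%nat q ltac:(lia)).
  rewrite stair_last in * by lia. rewrite stair_0 in * by lia. lia.
Qed.

Lemma stair_cover q x : (1 <= q <= b)%nat ->
  union_col u c d q x -> union_col u stair (fun p q => stair p (q - 1)) q x.
Proof.
  intros Hq [p [Hp Hx]].
  destruct (first_crossing (fun k => stair k (q - 1)) u x) as [k [Hk Hkx]]; cbv beta.
  - pose proof (c_ge_index p q Hp Hq). pose proof (d_shift p u q ltac:(lia) ltac:(lia) Hq).
    pose proof (target_ge_d u q ltac:(lia) Hq ltac:(lia)).
    pose proof (stair_ge_target u (q - 1) ltac:(lia)). simpl. lia.
  - exists k. split; [exact Hk|]. split; [|lia].
    rewrite stair_eq by lia. apply Z.max_lub; [|lia].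
    destruct (Nat.le_gt_cases k p) as [Hkp|Hpk].
    + pose proof (target_le_c_ext k q ltac:(lia) ltac:(lia)). rewrite c_ext_S in * by lia.
      pose proof (c_shift k p q ltac:(lia) ltac:(lia) Hq). lia.
    + pose proof (stair_ge_target (k - 1) (q - 1) ltac:(lia)).
      unfold target. destruct (Nat.leb_spec (k + b) (u + q)).
      * pose proof (stair_bounds (k - 1) (q - 1) ltac:(lia) ltac:(lia)). lia.
      * pose proof (target_ge_d (k - 1) q ltac:(lia) Hq ltac:(lia)).
        pose proof (d_shift p (k - 1) q ltac:(lia) ltac:(lia) Hq). lia.
Qed.

Lemma sorted_intervals_column q : (1 <= q <= b)%nat ->
  sorted_intervals (fun p => c p q) (fun p => d p q) u a.
Proof.
  intros Hq. split; intros p Hp.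
  - pose proof (Hrange p q Hp Hq). pose proof (Hdc p q Hp Hq). lia.
  - pose proof (Hcd' p q Hp Hq). lia.
Qed.

Lemma sorted_intervals_stair q : (1 <= q <= b)%nat ->
  sorted_intervals (fun p => stair p q) (fun p => stair p (q - 1)) u a.
Proof.
  intros Hq. split; intros p Hp.
  - pose proof (stair_bounds p q Hp ltac:(lia)). pose proof (stair_bounds p (q - 1) Hp ltac:(lia)).
    pose proof (stair_mono p q ltac:(lia) Hq). lia.
  - pose proof (stair_gt_prev p q ltac:(lia) ltac:(lia)). lia.
Qed.

Lemma row_sum_stair p : (1 <= p <= u)%nat ->
  sumZ (fun q => stair p (q - 1) - stair p q + 1) b = top p - Z.of_nat p + Z.of_nat b.
Proof. intros Hp. rewrite sumZ_telescope, stair_0, stair_last by lia. lia. Qed.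

Definition row_slack (p : nat) : Z :=
  (c p b - Z.of_nat p) + sumZ (fun q => c_ext p (q - 1) - d p q) b.

Lemma row_slack_nonneg p : (1 <= p <= u)%nat ->
  0 <= c p b - Z.of_nat p /\ 0 <= sumZ (fun q => c_ext p (q - 1) - d p q) b.
Proof.
  intros Hp. split.
  - pose proof (c_ge_index p b Hp ltac:(lia)). lia.
  - apply sumZ_nonneg. intros q Hq. pose proof (d_le_c_ext p q Hp Hq). lia.
Qed.

Lemma row_sum_column p : (1 <= p <= u)%nat ->
  sumZ (fun q => d p q - c p q + 1) b = top p - Z.of_nat p + Z.of_nat b - row_slack p.
Proof.
  intros Hp. unfold row_slack.
  transitivity (sumZ (fun q => (c_ext p (q - 1) - c_ext p q + 1) - (c_ext p (q - 1) - d p q)) b).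
  - apply sumZ_ext. intros q Hq. rewrite (c_ext_S p q) by lia. lia.
  - rewrite sumZ_sub, sumZ_telescope, (c_ext_S p b) by lia. simpl c_ext. lia.
Qed.

Lemma tight_of_sums_eq :
  (forall q, (1 <= q <= b)%nat ->
     sumZ (fun p => d p q - c p q + 1) u = sumZ (fun p => stair p (q - 1) - stair p q + 1) u) ->
  (forall p, (1 <= p <= u)%nat -> c p b = Z.of_nat p) /\
  (forall p q, (1 <= p <= u)%nat -> (1 <= q <= b)%nat -> d p q = c_ext p (q - 1)).
Proof.
  intros Hcol.
  assert (Hslack : forall p, (1 <= p <= u)%nat -> row_slack p = 0).
  { apply sumZ_eq0; [intros p Hp; pose proof (row_slack_nonneg p Hp); unfold row_slack; lia|].
    transitivity (sumZ (fun p => sumZ (fun q => stair p (q - 1) - stair p q + 1) b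
                               - sumZ (fun q => d p q - c p q + 1) b) u).
    { apply sumZ_ext. intros p Hp. rewrite row_sum_stair, row_sum_column by lia. lia. }
    rewrite sumZ_sub, (sumZ_swap (fun p q => stair p (q - 1) - stair p q + 1)),
      (sumZ_swap (fun p q => d p q - c p q + 1)).
    rewrite (sumZ_ext _ _ b Hcol). lia. }
  split.
  - intros p Hp. pose proof (Hslack p Hp). pose proof (row_slack_nonneg p Hp).
    unfold row_slack in *. lia.
  - intros p q Hp Hq. pose proof (Hslack p Hp). pose proof (row_slack_nonneg p Hp).
    unfold row_slack in *.
    enough (c_ext p (q - 1) - d p q = 0) by lia.
    apply (sumZ_eq0 (fun q => c_ext p (q - 1) - d p q) b); [|lia|exact Hq].
    intros i Hi. pose proof (d_le_c_ext p i Hp Hi). lia.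
Qed.

Section Tight.

Hypothesis Hlast : forall p, (1 <= p <= u)%nat -> c p b = Z.of_nat p.
Hypothesis Hshift : forall p q, (1 <= p <= u)%nat -> (1 <= q <= b)%nat -> d p q = c_ext p (q - 1).

Lemma c_corner_of_tight p q : (1 <= p)%nat -> (1 <= q <= b)%nat -> (p + b <= u + q)%nat ->
  c p q = Z.of_nat p.
Proof.
  intros Hp Hq Hpq. apply Z.le_antisymm; [|apply c_ge_index; lia].
  remember (b - q)%nat as k eqn:Hk. revert p q Hp Hq Hpq Hk.
  induction k as [|k IH]; intros p q Hp Hq Hpq Hk.
  - replace q with b by lia. rewrite Hlast by lia. lia.
  - pose proof (Hshift p (q + 1) ltac:(lia) ltac:(lia)) as Hs.
    rewrite Nat.add_sub, c_ext_S in Hs by lia.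
    pose proof (Hcd' (S p) (q + 1) ltac:(lia) ltac:(lia)) as Hgt.
    rewrite Nat.sub_succ, Nat.sub_0_r in Hgt.
    pose proof (IH (S p) (q + 1)%nat ltac:(lia) ltac:(lia) ltac:(lia) ltac:(lia)). lia.
Qed.

Lemma stair_eq_c_ext_of_tight p q : (1 <= p <= u)%nat -> (q <= b)%nat -> stair p q = c_ext p q.
Proof.
  revert q. induction p as [|p IH]; intros q Hp Hq; [lia|].
  destruct q as [|q]; [reflexivity|]. cbn [stair c_ext].
  assert (Htarget : target (S p) (S q) = c (S p) (S q)).
  { unfold target. destruct (Nat.leb_spec (S p + b) (u + S q)); [|reflexivity].
    symmetry. apply c_corner_of_tight; lia. }
  rewrite Htarget. apply Z.max_l.
  destruct p as [|p].
  - pose proof (Hrange 1 (S q) ltac:(lia) ltac:(lia)). simpl. lia.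
  - rewrite IH by lia.
    pose proof (Hshift (S p) (S q) ltac:(lia) ltac:(lia)) as Hs.
    pose proof (Hcd' (S (S p)) (S q) ltac:(lia) ltac:(lia)) as Hgt.
    rewrite Nat.sub_succ, Nat.sub_0_r in Hs, Hgt. lia.
Qed.

End Tight.

End Staircase.

Theorem lemma2p9 (u a b : nat) (c d : nat -> nat -> Z)
  (Hu : (1 <= u)%nat) (Ha : (1 <= a)%nat) (Hb : (1 <= b)%nat)
  (Huab : (u <= a - 1)%nat /\ (u <= b)%nat)
  (Hrange : forall p q, (1 <= p <= u)%nat -> (1 <= q <= b)%nat ->
     1 <= c p q <= Z.of_nat a /\ 1 <= d p q <= Z.of_nat a)
  (Hdc : forall p q, (1 <= p <= u)%nat -> (1 <= q <= b)%nat -> d p q >= c p q)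
  (Hcd : forall p q, (1 <= p <= u)%nat -> (1 <= q)%nat -> (q + 1 <= b)%nat ->
     c p q >= d p (q + 1)%nat)
  (Hcd' : forall p q, (2 <= p <= u)%nat -> (1 <= q <= b)%nat ->
     c p q > d (p - 1)%nat q) :
  exists c' d' : nat -> nat -> Z,
    (* (i) *)
    (forall p q, (1 <= p <= u)%nat -> (1 <= q <= b)%nat -> d' p q >= c' p q) /\
    (forall p q, (2 <= p <= u)%nat -> (1 <= q <= b)%nat ->
       c' p q > d' (p - 1)%nat q) /\
    (* (ii) *)
    (forall p q, (1 <= p <= u)%nat -> (1 <= q <= b - 1)%nat ->
       c' p q = d' p (q + 1)%nat) /\
    (* (iii) *)
    (forall p, (1 <= p <= u)%nat ->
       d' p 1%nat = Z.of_nat a - Z.of_nat u + Z.of_nat p /\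
       c' p b = Z.of_nat p) /\
    (* (iv) *)
    (forall q, (1 <= q <= b)%nat ->
       forall x : Z, union_col u c d q x -> union_col u c' d' q x) /\
    ((forall q, (1 <= q <= b)%nat ->
        forall x : Z, union_col u c d q x <-> union_col u c' d' q x) ->
     forall p q, (1 <= p <= u)%nat -> (1 <= q <= b)%nat ->
       c p q = c' p q /\ d p q = d' p q).
Proof.
  destruct Huab as [Hua Hub].
  exists (stair u a b c), (fun p q => stair u a b c p (q - 1)).
  split; [|split; [|split; [|split; [|split]]]].
  - intros p q Hp Hq. apply Z.le_ge, (stair_mono u a b c d); auto; lia.
  - intros p q Hp Hq. apply Z.lt_gt, stair_gt_prev; auto; lia.
  - intros p q Hp Hq. now rewrite Nat.add_sub.
  - intros p Hp. split; [apply stair_0 | apply (stair_last u a b c d)]; auto; lia.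
  - intros q Hq x. apply (stair_cover u a b c d); auto.
  - intros Hunion.
    destruct (tight_of_sums_eq u a b c d) as [Hlast Hshift]; auto.
    { intros q Hq. apply sum_lengths_eq with a;
        [apply (sorted_intervals_column u a b c d) | apply (sorted_intervals_stair u a b c d)
        | apply Hunion]; auto. }
    intros p q Hp Hq. rewrite (Hshift p q Hp Hq).
    rewrite !(stair_eq_c_ext_of_tight u a b c d); auto; try lia.
    split; [|reflexivity]. symmetry. now apply c_ext_S.
Qed.
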